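(* Let $p\ge 2$ and $\varphi\in\mathbb{C}^{p-1}\setminus\Omega$. Then $\dim Z^2_{0}(F_\varphi,F_\varphi)=4p^2-8p+5$.
   Context: Let $p\ge 2$ and $\varphi=(\varphi_1,\dots,\varphi_{p-1})\in\mathbb{C}^{p-1}$. $F_\varphi$ denotes the $2p$-dimensional complex Lie algebra with basis $X_1,\dots,X_{2p}$ whose nonzero brackets (up to antisymmetry) are $[X_1,X_2]=X_1$, $[X_2,X_{2k+1}]=\varphi_kX_{2k+1}$, $[X_2,X_{2k+2}]=-(1+\varphi_k)X_{2k+2}$, $[X_{2k+1},X_{2k+2}]=X_1$ for $1\le k\le p-1$. It is graded by $(F_\varphi)_0=\mathbb{C}X_2$, $(F_\varphi)_1=\operatorname{span}\{X_3,\dots,X_{2p}\}$, $(F_\varphi)_2=\mathbb{C}X_1$. A $2$-cochain $\psi$ is homogeneous of degree $k$ if $\psi((F_\varphi)_i,(F_\varphi)_j)\subset(F_\varphi)_{i+j+k}$; $Z^2_k(F_\varphi,F_\varphi)$ denotes the space of homogeneous degree-$k$ $2$-cocycles of the Chevalley–Eilenberg complex with adjoint coefficients. $\Omega=\Omega_1\cup\Omega_2\subset\mathbb{C}^{p-1}$, where $\Omega_1$ is the union of the hyperplanes $\{1+\varphi_i+\varphi_j=0\}$, $\{2+\varphi_i+\varphi_j=0\}$ ($1\le i,j\le p-1$), $\{\varphi_i-\varphi_j=0\}$ ($i\ne j$), $\{\varphi_i=0\}$, $\{\varphi_i+1=0\}$, $\{2\varphi_i+1=0\}$, and $\Omega_2$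 is the union of $\{1+\varphi_i-\varphi_j=0\}$, $\{\varphi_i+\varphi_j=0\}$, $\{2+\varphi_i=0\}$, $\{1-\varphi_i=0\}$, $\{1+2\varphi_i-\varphi_j=0\}$, $\{1+2\varphi_i+\varphi_j=0\}$, $\{2\varphi_i-\varphi_j=0\}$, $\{2+2\varphi_i+\varphi_j=0\}$ ($1\le i,j\le p-1$). *)

(* The ground field C is modelled as R[i] (complex numbers
   over an arbitrary realType R, a complete archimedean ordered field;
   hence R[i] is the field of complex numbers). *)
From HB Require Import structures.
From mathcomp Require Import all_boot all_algebra.
From mathcomp Require Import reals complex.
Set Implicit Arguments. Unset Strict Implicit. Unset Printing Implicit Defensive.
Import GRing.Theory.
Local Open Scope ring_scope.

Section Falg.
Variable C : fieldType.
Variable p : nat.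
(* phi = (phi_1, ..., phi_{p-1}); phi_k is  phi (k-1). *)
Variable phi : 'I_p.-1 -> C.

(* dimension of F_phi: (2*(p-1)).+2 = 2p  for p >= 1 (written as a successor
   so that the index type has an explicit 0). *)
Definition dimF := (2 * p.-1).+2.

(* Vectors of F_phi are row vectors of coordinates in the basis
   X_1, ..., X_{2p}; the basis vector X_{m+1} is indexed by m : 'I_dimF
   (0-based), i.e. X_1 <-> 0, X_2 <-> 1, X_{2k+1} <-> 2k, X_{2k+2} <-> 2k+1. *)
Definition vecF := 'rV[C]_dimF.
Definition X (m : 'I_dimF) : vecF := delta_mx 0 m.

(* phi_k for k : nat, meaningful for 1 <= k <= p-1 *)
Definition phin (k : nat) : C :=
  match (insub k.-1 : option 'I_p.-1) with Some i => phi i | None => 0 end.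

(* Brackets [X_{i+1}, X_{j+1}] for 0-based i < j:
   [X_1,X_2] = X_1,
   [X_2,X_{2k+1}] = phi_k X_{2k+1},  [X_2,X_{2k+2}] = -(1+phi_k) X_{2k+2},
   [X_{2k+1},X_{2k+2}] = X_1   (1 <= k <= p-1); all other brackets zero. *)
Definition br_lt (i j : 'I_dimF) : vecF :=
  if (i == 0%N :> nat) && (j == 1%N :> nat) then X ord0
  else if (i == 1%N :> nat) && (2 <= j)%N then
    (if odd j then - (1 + phin j./2) else phin j./2) *: X j
  else if [&& (2 <= i)%N, ~~ odd i & (j == i.+1 :> nat)] then X ord0
  else 0.

Definition brX (i j : 'I_dimF) : vecF :=
  if (i < j)%N then br_lt i j else if (j < i)%N then - br_lt j i else 0.

Definition brF (x y : vecF) : vecF :=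
  \sum_(i < dimF) \sum_(j < dimF) (x 0 i * y 0 j) *: brX i j.

(* 2-cochains with adjoint coefficients: bilinear maps F x F -> F, given by
   their values psi(X_i, X_j) on pairs of basis vectors. *)
Definition cochain2 := {ffun 'I_dimF * 'I_dimF -> vecF}.

Definition ev2 (psi : cochain2) (x y : vecF) : vecF :=
  \sum_(i < dimF) \sum_(j < dimF) (x 0 i * y 0 j) *: psi (i, j).

(* grading: (F)_0 = C X_2, (F)_1 = span(X_3..X_{2p}), (F)_2 = C X_1 *)
Definition degX (m : 'I_dimF) : nat :=
  if (m == 0%N :> nat) then 2%N else if (m == 1%N :> nat) then 0%N else 1%N.

Definition in_grade (a : nat) (x : vecF) : Prop :=
  forall m : 'I_dimF, degX m != a -> x 0 m = 0.

Definition alternating (psi : cochain2) : Prop :=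
  forall x : vecF, ev2 psi x x = 0.

(* homogeneous of degree k (here only k = 0 is used; k is a nat so that
   the degree-0 case is literally psi(F_i, F_j) in F_{i+j}) *)
Definition homogeneous (k : nat) (psi : cochain2) : Prop :=
  forall (a b : nat) (x y : vecF),
    in_grade a x -> in_grade b y -> in_grade (a + b + k) (ev2 psi x y).

Definition d2 (psi : cochain2) (x y z : vecF) : vecF :=
  brF x (ev2 psi y z) - brF y (ev2 psi x z) + brF z (ev2 psi x y)
  - ev2 psi (brF x y) z + ev2 psi (brF x z) y - ev2 psi (brF y z) x.

Definition is_cocycle (psi : cochain2) : Prop :=
  forall x y z : vecF, d2 psi x y z = 0.

Definition in_Z2_0 (psi : cochain2) : Prop :=
  [/\ alternating psi, homogeneous 0 psi & is_cocycle psi].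

End Falg.

(* phi lies outside the exceptional set Omega = Omega_1 \cup Omega_2
   (indices i, j range over 1..p-1, i.e. over 'I_p.-1) *)
Definition notin_Omega (C : fieldType) (p : nat) (phi : 'I_p.-1 -> C) : Prop :=
  (forall i j : 'I_p.-1, 1 + phi i + phi j != 0) /\
  (forall i j : 'I_p.-1, 2%:R + phi i + phi j != 0) /\
  (forall i j : 'I_p.-1, i != j -> phi i - phi j != 0) /\
  (forall i : 'I_p.-1, phi i != 0) /\
  (forall i : 'I_p.-1, phi i + 1 != 0) /\
  (forall i : 'I_p.-1, 2%:R * phi i + 1 != 0) /\
  (forall i j : 'I_p.-1, 1 + phi i - phi j != 0) /\
  (forall i j : 'I_p.-1, phi i + phi j != 0) /\
  (forall i : 'I_p.-1, 2%:R + phi i != 0) /\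
  (forall i : 'I_p.-1, 1 - phi i != 0) /\
  (forall i j : 'I_p.-1, 1 + 2%:R * phi i - phi j != 0) /\
  (forall i j : 'I_p.-1, 1 + 2%:R * phi i + phi j != 0) /\
  (forall i j : 'I_p.-1, 2%:R * phi i - phi j != 0) /\
  (forall i j : 'I_p.-1, 2%:R + 2%:R * phi i + phi j != 0).

(* A homogeneous degree-0 cochain psi is determined by the scalar c with
   psi(X_2, X_1) = c X_1, the matrix A of psi(X_2, -) on F_1, and the scalars
   beta_uw with psi(X_u, X_w) = beta_uw X_1 for X_u, X_w in F_1.  By the
   grading, the cocycle identity reduces to the X_1-coordinate of
   d psi(X_2, X_u, X_w), which reads (1 + lambda_u + lambda_w) beta_uw = r_uw(c, A),
   lambda_u being the eigenvalue of ad X_2 on X_u.  Off Omega the factor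
   1 + lambda_u + lambda_w vanishes only on the dual pairs (X_2k+1, X_2k+2);
   there the equation becomes c = A_2k+1,2k+1 + A_2k+2,2k+2 and beta is free,
   elsewhere it determines beta.  So c and the (2p-2)^2 entries of A, with each
   diagonal entry A_2k+2,2k+2 traded for the beta of its pair, are free
   coordinates on Z^2_0, of dimension 1 + (2p-2)^2 = 4p^2 - 8p + 5. *)

From HB Require Import structures.
From mathcomp Require Import all_boot all_algebra.
From mathcomp Require Import reals complex.
From mathcomp Require Import ring zify.
Import GRing.Theory Num.Theory.
Local Open Scope ring_scope.

Set Implicit Arguments. Unset Strict Implicit. Unset Printing Implicit Defensive.

Lemma mx_eqN_eq0 (R : numDomainType) (m k : nat) (A : 'M[R]_(m, k)) :
  A = - A -> A = 0.
Proof.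
move=> AN; apply/matrixP => i j; have := congr1 (fun B : 'M_(m, k) => B i j) AN.
by rewrite !mxE => /eqP; rewrite -subr_eq0 opprK -mulr2n mulrn_eq0 /= => /eqP.
Qed.

Lemma linearP_sumZ (R : pzRingType) (V W : lmodType R) (f : V -> W) :
  (forall a u v, f (a *: u + v) = a *: f u + f v) ->
  forall (I : Type) (r : seq I) (F : I -> V) (a : I -> R),
  f (\sum_(i <- r) a i *: F i) = \sum_(i <- r) a i *: f (F i).
Proof.
move=> fP I r F a; have f0 : f 0 = 0.
  by have := fP (-1) 0 0; rewrite scaler0 addr0 scaleN1r addNr.
elim: r => [|i r IHr]; first by rewrite !big_nil.
by rewrite !big_cons fP IHr.
Qed.

Lemma sum_enum_val_eq (T : finType) (R : pzSemiRingType) (f : 'I_#|T| -> R) (j : T) :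
  \sum_k f k * (enum_val k == j)%:R = f (enum_rank j).
Proof.
rewrite (bigD1 (enum_rank j)) //= enum_rankK eqxx mulr1 big1 ?addr0 // => k nk.
have -> : (enum_val k == j) = false; last by rewrite mulr0.
by apply/eqP => E; move: nk; rewrite -E enum_valK eqxx.
Qed.

Section Cochains.
Variables (C : fieldType) (p : nat).
Local Notation n := (dimF p).
Local Notation vec := (vecF C p).
Local Notation coch := (cochain2 C p).
Implicit Types (psi : coch) (x y : vec).

Lemma XE (m l : 'I_n) : X C m 0 l = (m == l)%:R.
Proof. by rewrite /X mxE eqxx eq_sym. Qed.

Lemma scaleXE a (k m : 'I_n) : (a *: X C k) 0 m = a * (k == m)%:R.
Proof. by rewrite mxE XE. Qed.

Lemma ev2_Xl psi i y : ev2 psi (X C i) y = \sum_j y 0 j *: psi (i, j).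
Proof.
rewrite /ev2 (bigD1 i) //= [X in _ + X]big1 => [|k nki]; last first.
  by apply: big1 => j _; rewrite XE eq_sym (negbTE nki) mul0r scale0r.
by rewrite addr0; apply: eq_bigr => j _; rewrite XE eqxx mul1r.
Qed.

Lemma ev2_X psi i j : ev2 psi (X C i) (X C j) = psi (i, j).
Proof.
rewrite ev2_Xl (bigD1 j) //= [X in _ + X]big1 => [|k nkj].
  by rewrite XE eqxx scale1r addr0.
by rewrite XE eq_sym (negbTE nkj) scale0r.
Qed.

Lemma ev2Pl psi a x x' y : ev2 psi (a *: x + x') y = a *: ev2 psi x y + ev2 psi x' y.
Proof.
rewrite /ev2 scaler_sumr -big_split; apply: eq_bigr => i _.
rewrite scaler_sumr -big_split; apply: eq_bigr => j _.
by rewrite !mxE /= scalerA -scalerDl mulrDl mulrA.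
Qed.

Lemma ev2Pr psi a x y y' : ev2 psi x (a *: y + y') = a *: ev2 psi x y + ev2 psi x y'.
Proof.
rewrite /ev2 scaler_sumr -big_split; apply: eq_bigr => i _.
rewrite scaler_sumr -big_split; apply: eq_bigr => j _.
by rewrite !mxE /= scalerA -scalerDl; congr (_ *: _); ring.
Qed.

Lemma ev2Pc (psi psi' : coch) a x y :
  ev2 (a *: psi + psi') x y = a *: ev2 psi x y + ev2 psi' x y.
Proof.
rewrite /ev2 scaler_sumr -big_split; apply: eq_bigr => i _.
rewrite scaler_sumr -big_split; apply: eq_bigr => j _.
by rewrite /= !ffunE scalerDr !scalerA mulrC.
Qed.

Lemma ev2c0 x y : ev2 (0 : coch) x y = 0.
Proof. by rewrite /ev2 big1 // => i _; rewrite big1 // => j _; rewrite ffunE scaler0. Qed.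

Lemma ev20l psi y : ev2 psi 0 y = 0.
Proof. by rewrite /ev2 big1 // => i _; rewrite big1 // => j _; rewrite mxE mul0r scale0r. Qed.

Lemma ev20r psi x : ev2 psi x 0 = 0.
Proof. by rewrite /ev2 big1 // => i _; rewrite big1 // => j _; rewrite mxE mulr0 scale0r. Qed.

Lemma ev2Zl psi a x y : ev2 psi (a *: x) y = a *: ev2 psi x y.
Proof. by rewrite -[a *: x]addr0 ev2Pl ev20l addr0. Qed.

Lemma ev2Nl psi x y : ev2 psi (- x) y = - ev2 psi x y.
Proof. by rewrite -[- x]addr0 -scaleN1r ev2Pl ev20l addr0 scaleN1r. Qed.

Lemma ev2Nr psi x y : ev2 psi x (- y) = - ev2 psi x y.
Proof. by rewrite -[- y]addr0 -scaleN1r ev2Pr ev20r addr0 scaleN1r. Qed.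

Lemma ev2Dl psi x x' y : ev2 psi (x + x') y = ev2 psi x y + ev2 psi x' y.
Proof. by have := ev2Pl psi 1 x x' y; rewrite !scale1r. Qed.

Lemma ev2Dr psi x y y' : ev2 psi x (y + y') = ev2 psi x y + ev2 psi x y'.
Proof. by have := ev2Pr psi 1 x y y'; rewrite !scale1r. Qed.

Definition skew psi := forall i j, psi (j, i) = - psi (i, j).

Lemma ev2_skew psi : skew psi -> forall x y, ev2 psi y x = - ev2 psi x y.
Proof.
move=> psiN x y; rewrite /ev2 exchange_big -sumrN; apply: eq_bigr => j _.
by rewrite -sumrN; apply: eq_bigr => i _; rewrite psiN scalerN mulrC.
Qed.

End Cochains.

Section Differential.
Variables (C : fieldType) (p : nat) (phi : 'I_p.-1 -> C).
Local Notation n := (dimF p).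
Local Notation vec := (vecF C p).
Local Notation coch := (cochain2 C p).
Implicit Types (psi : coch) (x y z : vec).

Definition brC : coch := [ffun ij => brX phi ij.1 ij.2].

Lemma brF_ev2 x y : brF phi x y = ev2 brC x y.
Proof. by apply: eq_bigr => i _; apply: eq_bigr => j _; rewrite ffunE. Qed.

Lemma brC_skew : skew brC.
Proof. by move=> i j; rewrite !ffunE /= /brX; case: ltngtP; rewrite ?opprK ?oppr0. Qed.

Lemma d2E psi x y z : d2 phi psi x y z =
  ev2 brC x (ev2 psi y z) - ev2 brC y (ev2 psi x z) + ev2 brC z (ev2 psi x y)
  - ev2 psi (ev2 brC x y) z + ev2 psi (ev2 brC x z) y - ev2 psi (ev2 brC y z) x.
Proof. by rewrite /d2 !brF_ev2. Qed.

Lemma d2P1 psi a x x' y z :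
  d2 phi psi (a *: x + x') y z = a *: d2 phi psi x y z + d2 phi psi x' y z.
Proof. by rewrite !d2E !(ev2Pl, ev2Pr); apply/rowP => m; rewrite !mxE; ring. Qed.

Lemma d2P2 psi a x y y' z :
  d2 phi psi x (a *: y + y') z = a *: d2 phi psi x y z + d2 phi psi x y' z.
Proof. by rewrite !d2E !(ev2Pl, ev2Pr); apply/rowP => m; rewrite !mxE; ring. Qed.

Lemma d2P3 psi a x y z z' :
  d2 phi psi x y (a *: z + z') = a *: d2 phi psi x y z + d2 phi psi x y z'.
Proof. by rewrite !d2E !(ev2Pl, ev2Pr); apply/rowP => m; rewrite !mxE; ring. Qed.

Lemma d2Pc (psi psi' : coch) a x y z :
  d2 phi (a *: psi + psi') x y z = a *: d2 phi psi x y z + d2 phi psi' x y z.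
Proof. by rewrite !d2E !(ev2Pc, ev2Pr); apply/rowP => m; rewrite !mxE; ring. Qed.

Lemma d2c0 x y z : d2 phi 0 x y z = 0.
Proof. by rewrite d2E !ev2c0 !ev20r !(subr0, addr0). Qed.

Lemma cocycle_basis psi :
  (forall i j k, d2 phi psi (X C i) (X C j) (X C k) = 0) -> is_cocycle phi psi.
Proof.
move=> d2X x y z; rewrite (row_sum_delta x).
rewrite (linearP_sumZ (f := fun x => d2 phi psi x y z)) => [|*]; last exact: d2P1.
apply: big1 => i _; rewrite (row_sum_delta y).
rewrite (linearP_sumZ (f := fun y => d2 phi psi _ y z)) => [|*]; last exact: d2P2.
rewrite big1 ?scaler0 // => j _; rewrite (row_sum_delta z).
rewrite (linearP_sumZ (f := d2 phi psi _ _)) => [|*]; last exact: d2P3.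
by rewrite big1 ?scaler0 // => k _; rewrite d2X scaler0.
Qed.

Lemma d2_skew12 psi : skew psi -> forall x y z, d2 phi psi y x z = - d2 phi psi x y z.
Proof.
move=> psiN x y z; rewrite !d2E (ev2_skew psiN x y) (ev2_skew brC_skew x y) ev2Nr ev2Nl.
by apply/rowP => m; rewrite !mxE; ring.
Qed.

Lemma d2_skew23 psi : skew psi -> forall x y z, d2 phi psi x z y = - d2 phi psi x y z.
Proof.
move=> psiN x y z; rewrite !d2E (ev2_skew psiN y z) (ev2_skew brC_skew y z) ev2Nr ev2Nl.
by apply/rowP => m; rewrite !mxE; ring.
Qed.

End Differential.

Section Fphi.
Variables (C : numFieldType) (p : nat) (phi : 'I_p.-1 -> C).
Local Notation n := (dimF p).
Local Notation vec := (vecF C p).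
Local Notation coch := (cochain2 C p).
Implicit Types (psi : coch) (x y z : vec).

Definition idx1 : 'I_n := ord0.
Definition idx2 : 'I_n := @Ordinal n 1 isT.

Lemma idx_cases (m : 'I_n) : m = idx1 \/ m = idx2 \/ (2 <= m)%N.
Proof.
have [m0|[m1|m2]] : (m:nat) = 0%N \/ (m:nat) = 1%N \/ (2 <= m)%N by lia.
- by left; apply/val_inj.
- by right; left; apply/val_inj.
- by right; right.
Qed.

Lemma degX_idx1 : degX idx1 = 2%N. Proof. by []. Qed.
Lemma degX_idx2 : degX idx2 = 0%N. Proof. by []. Qed.

Lemma degX_ge2 (m : 'I_n) : (2 <= m)%N -> degX m = 1%N.
Proof.
move=> m2; rewrite /degX.
have -> : (m == 0 :> nat) = false by apply/eqP; lia.
by have -> : (m == 1 :> nat) = false by apply/eqP; lia.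
Qed.

Lemma degX_le2 (m : 'I_n) : (degX m <= 2)%N.
Proof. by rewrite /degX; case: ifP => _ //; case: ifP. Qed.

(* [eig u] is the eigenvalue of [ad X_2] on the basis vector [u >= 2], and
   [symp u l] the [X_1]-coefficient of [[u, l]] for [u, l >= 2]. *)
Definition eig (u : nat) : C :=
  if odd u then - (1 + phin phi u./2) else phin phi u./2.
Definition symp (u l : nat) : C :=
  if odd u then - (l == u.-1)%:R else (l == u.+1)%:R.

Lemma symp_0 (u : nat) : (2 <= u)%N -> symp u 0 = 0.
Proof.
move=> u2; rewrite /symp.
have -> : (0 == u.-1 :> nat) = false by apply/eqP; lia.
by case: (odd u); rewrite ?oppr0.
Qed.

Lemma symp_1 (u : nat) : (2 <= u)%N -> symp u 1 = 0.
Proof.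
move=> u2; rewrite /symp; case Ou: (odd u).
- have -> : (1 == u.-1 :> nat) = false; last by rewrite oppr0.
  apply/eqP => E; have u_2 : u = 2%N by lia.
  by rewrite u_2 in Ou.
- by have -> : (1 == u.+1 :> nat) = false by apply/eqP; lia.
Qed.

Lemma brX_idx1 (j : 'I_n) : brX phi idx1 j = ((j : nat) == 1)%:R *: X C idx1.
Proof. by case: j => [[|[|j]] ?]; rewrite /brX /br_lt /= ?scale0r ?scale1r. Qed.

Lemma brX_idx2 (j : 'I_n) : brX phi idx2 j =
  if (j : nat) == 0 then - X C idx1 else if (j : nat) == 1 then 0 else eig j *: X C j.
Proof. by case: j => [[|[|j]] ?]. Qed.

Lemma brX_idx2_ge2 (u : 'I_n) : (2 <= u)%N -> brX phi idx2 u = eig u *: X C u.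
Proof.
move=> u2; rewrite brX_idx2.
have -> : (u == 0 :> nat) = false by apply/eqP; lia.
by have -> : (u == 1 :> nat) = false by apply/eqP; lia.
Qed.

Lemma brX_ge2_idx2 (u : 'I_n) : (2 <= u)%N -> brX phi u idx2 = - (eig u *: X C u).
Proof.
move=> u2; rewrite /brX /br_lt /=.
have -> : (u < 1)%N = false by lia.
by have -> : (1 < u)%N = true by lia.
Qed.

Lemma brX_ge2 (u j : 'I_n) : (2 <= u)%N -> (j : nat) != 1 ->
  brX phi u j = symp u j *: X C idx1.
Proof.
move=> u2 j1.
have [j0|j2] : (j : nat) = 0%N \/ (2 <= j)%N by lia.
  rewrite /brX /br_lt j0.
  have -> : (u < 0)%N = false by lia.
  have -> : (0 < u)%N = true by lia.
  have -> : (u == 1 :> nat) = false by apply/eqP; lia.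
  by rewrite /= symp_0 // scale0r oppr0.
rewrite /brX /br_lt /symp.
have -> : (u == 0 :> nat) = false by apply/eqP; lia.
have -> : (u == 1 :> nat) = false by apply/eqP; lia.
have -> : (j == 0 :> nat) = false by apply/eqP; lia.
have -> : (j == 1 :> nat) = false by apply/eqP; lia.
rewrite u2 j2 /=.
case: ltngtP => [uj|ju|/val_inj uj].
- case Ou: (odd u).
  + have -> : (j == u.-1 :> nat) = false by apply/eqP; lia.
    by rewrite oppr0 scale0r.
  + by case: eqP => _; rewrite ?scale1r ?scale0r.
- have -> : (j == u.+1 :> nat) = false by apply/eqP; lia.
  have [uS|uS] := eqVneq (u : nat) j.+1.
  + have -> : (j == u.-1 :> nat) by rewrite uS.
    by rewrite uS /=; case: (odd j); rewrite /= ?scaleNr ?scale1r ?oppr0 ?scale0r.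
  + have -> : (j == u.-1 :> nat) = false by apply/eqP; lia.
    by rewrite ?andbF; case: (odd u); rewrite ?oppr0 scale0r ?oppr0.
- subst j.
  have -> : (u == u.-1 :> nat) = false by apply/eqP; lia.
  have -> : (u == u.+1 :> nat) = false by apply/eqP; lia.
  by case: (odd u); rewrite ?oppr0 scale0r.
Qed.

Lemma brX_idx2_coord1 (l : 'I_n) : brX phi idx2 l 0 idx1 = - (l == idx1)%:R.
Proof.
rewrite brX_idx2; have [->|[->|l2]] := idx_cases l.
- by rewrite /= mxE XE.
- by rewrite /= mxE oppr0.
- have -> : (l == 0 :> nat) = false by apply/eqP; lia.
  have -> : (l == 1 :> nat) = false by apply/eqP; lia.
  have l1 : (l == idx1) = false by apply/eqP => E; move: l2; rewrite E.
  by rewrite scaleXE l1 mulr0 oppr0.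
Qed.

Lemma brX_ge2_coord1 (u l : 'I_n) : (2 <= u)%N -> brX phi u l 0 idx1 = symp u l.
Proof.
move=> u2; have [->|l1] := eqVneq l idx2.
  have u1 : (u == idx1) = false by apply/eqP => E; move: u2; rewrite E.
  by rewrite brX_ge2_idx2 // mxE scaleXE u1 mulr0 oppr0 symp_1.
by rewrite brX_ge2 ?scaleXE ?eqxx ?mulr1 //; apply: contra_neq l1 => E; apply/val_inj.
Qed.



Lemma ev2_brC_coord (i m : 'I_n) y :
  ev2 (brC phi) (X C i) y 0 m = \sum_j y 0 j * brX phi i j 0 m.
Proof. by rewrite ev2_Xl summxE; apply: eq_bigr => j _; rewrite mxE ffunE. Qed.

Definition homog0 psi :=
  forall i j m : 'I_n, degX m != (degX i + degX j)%N -> psi (i, j) 0 m = 0.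

Lemma X_in_grade (m : 'I_n) : in_grade (degX m) (X C m).
Proof. by move=> l; rewrite XE; case: (eqVneq m l) => [->|]; rewrite ?eqxx. Qed.

Lemma in_grade_ge3 a x : (3 <= a)%N -> in_grade a x -> x = 0.
Proof.
move=> a3 xa; apply/rowP => m; rewrite mxE; apply: xa.
by apply/negP => /eqP E; move: (degX_le2 m); rewrite E; lia.
Qed.

Lemma in_gradeD a x y : in_grade a x -> in_grade a y -> in_grade a (x + y).
Proof. by move=> xa ya m Hm; rewrite mxE xa // ya // addr0. Qed.

Lemma in_gradeB a x y : in_grade a x -> in_grade a y -> in_grade a (x - y).
Proof. by move=> xa ya m Hm; rewrite !mxE xa // ya // subr0. Qed.

Lemma ev2_in_grade psi a b x y : homog0 psi ->
  in_grade a x -> in_grade b y -> in_grade (a + b) (ev2 psi x y).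
Proof.
move=> psi0 xa yb m Hm; rewrite /ev2 summxE big1 // => i _.
rewrite summxE big1 // => j _; rewrite mxE.
case: (eqVneq (degX i) a) => [Ei|Ni]; last by rewrite xa // !mul0r.
case: (eqVneq (degX j) b) => [Ej|Nj]; last by rewrite (yb j) // mulr0 mul0r.
by rewrite psi0 ?mulr0 // Ei Ej.
Qed.

Lemma homogeneous0P psi : homogeneous 0 psi <-> homog0 psi.
Proof.
split=> [psi0 i j m Hm|psi0 a b x y xa yb].
  have := psi0 _ _ _ _ (X_in_grade (m := i)) (X_in_grade (m := j)).
  by rewrite ev2_X addn0; apply.
by rewrite addn0; apply: ev2_in_grade.
Qed.

Lemma alternatingP psi : alternating psi <-> skew psi.
Proof.
split=> [psi0 i j|psiN x]; last first.
  by apply: mx_eqN_eq0; rewrite {1}(ev2_skew psiN x x).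
have := psi0 (X C i + X C j); rewrite ev2Dl !ev2Dr !ev2_X.
have := psi0 (X C i); have := psi0 (X C j); rewrite !ev2_X => -> ->.
by rewrite add0r addr0 => /eqP; rewrite addr_eq0 => /eqP ->; rewrite opprK.
Qed.

Lemma brC_homog0 : homog0 (brC phi).
Proof.
move=> i j m; rewrite ffunE /=.
have [->|[->|i2]] := idx_cases i.
- move=> Hm; rewrite brX_idx1 scaleXE.
  case: (eqVneq idx1 m) => [Em|]; last by rewrite /= ?mulr0n mulr0.
  case: (eqVneq (j : nat) 1) => [j1|]; last by rewrite /= ?mulr0n mul0r.
  by move: Hm; rewrite -Em /degX j1.
- have [->|[->|j2]] := idx_cases j.
  + move=> Hm; rewrite brX_idx2 /= mxE XE.
    case: (eqVneq idx1 m) => [Em|]; last by rewrite /= ?mulr0n oppr0.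
    by move: Hm; rewrite -Em.
  + by rewrite brX_idx2 /= mxE.
  + move=> Hm; rewrite brX_idx2_ge2 // scaleXE.
    case: (eqVneq j m) => [Em|]; last by rewrite /= ?mulr0n mulr0.
    by move: Hm; rewrite -Em degX_idx2 add0n eqxx.
- have [->|j1] := eqVneq j idx2.
    move=> Hm; rewrite brX_ge2_idx2 // mxE scaleXE.
    case: (eqVneq i m) => [Em|]; last by rewrite /= ?mulr0n mulr0 oppr0.
    by move: Hm; rewrite -Em degX_idx2 addn0 eqxx.
  have j1' : (j : nat) != 1%N by apply: contra_neq j1 => E; apply/val_inj.
  move=> Hm; rewrite brX_ge2 // scaleXE.
  case: (eqVneq idx1 m) => [Em|]; last by rewrite /= ?mulr0n mulr0.
  have [j0|[j1''|j2]] := idx_cases j.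
  + by rewrite j0 symp_0 // mul0r.
  + by rewrite j1'' eqxx in j1.
  + by move: Hm; rewrite -Em degX_idx1 (degX_ge2 i2) (degX_ge2 j2).
Qed.

Lemma d2_in_grade psi a b c x y z : homog0 psi ->
  in_grade a x -> in_grade b y -> in_grade c z -> in_grade (a + b + c) (d2 phi psi x y z).
Proof.
move=> psi0 xa yb zc; rewrite d2E.
have G := ev2_in_grade; have B0 := brC_homog0.
repeat apply: in_gradeB || apply: in_gradeD.
- by rewrite -addnA; apply: (G) => //; apply: (G).
- by rewrite [(a + b)%N]addnC -addnA; apply: (G) => //; apply: (G).
- by rewrite addnC; apply: (G) => //; apply: (G).
- by apply: (G) => //; apply: (G).
- by rewrite addnAC; apply: (G) => //; apply: (G).
- by rewrite -addnA addnC; apply: (G) => //; apply: (G).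
Qed.

Lemma cocycle_sorted psi : skew psi ->
  (forall i j k : 'I_n, (i < j < k)%N -> d2 phi psi (X C i) (X C j) (X C k) = 0) ->
  is_cocycle phi psi.
Proof.
move=> psiN d2X; apply: cocycle_basis.
have S12 := d2_skew12 phi psiN; have S23 := d2_skew23 phi psiN.
have E : forall x y z, d2 phi psi y x z = 0 -> d2 phi psi x y z = 0.
  by move=> x y z H; rewrite (S12 y x z) H oppr0.
have F : forall x y z, d2 phi psi x z y = 0 -> d2 phi psi x y z = 0.
  by move=> x y z H; rewrite (S23 x z y) H oppr0.
have D1 : forall x z, d2 phi psi x x z = 0.
  by move=> x z; apply: mx_eqN_eq0; rewrite {1}S12.
have D2 : forall x z, d2 phi psi x z z = 0.
  by move=> x z; apply: mx_eqN_eq0; rewrite {1}S23.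
move=> i j k.
case: (ltngtP i j) => [ij|ji|/val_inj ->]; last exact: D1.
- case: (ltngtP j k) => [jk|kj|/val_inj ->]; last exact: D2.
  + by apply: (d2X); rewrite ij jk.
  + case: (ltngtP i k) => [ik|ki|/val_inj ->].
    * by apply: (F); apply: (d2X); rewrite ik kj.
    * by apply: (F); apply: (E); apply: (d2X); rewrite ki ij.
    * by apply: (F); apply: (D1).
- case: (ltngtP i k) => [ik|ki|/val_inj ->].
  + by apply: (E); apply: (d2X); rewrite ji ik.
  + case: (ltngtP j k) => [jk|kj|/val_inj ->].
    * by apply: (E); apply: (F); apply: (d2X); rewrite jk ki.
    * by apply: (E); apply: (F); apply: (E); apply: (d2X); rewrite kj ji.
    * exact: D2.
  + by apply: (E); apply: (D2).
Qed.

(* By the grading, the only nonzero component of [d2 psi] on sorted basis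
   triples is the [X_1]-coordinate of [d2 psi X_2 X_u X_w]. *)
Lemma cocycle_reduction psi : skew psi -> homog0 psi ->
  (forall u w : 'I_n, (2 <= u)%N -> (u < w)%N ->
     d2 phi psi (X C idx2) (X C u) (X C w) 0 idx1 = 0) ->
  is_cocycle phi psi.
Proof.
move=> psiN psi0 d2uw; apply: cocycle_sorted => // i j k /andP [ij jk].
have G := d2_in_grade psi0 (X_in_grade (m := i)) (X_in_grade (m := j)) (X_in_grade (m := k)).
have k2 : (2 <= k)%N by lia.
have [Ei|[Ei|i2]] := idx_cases i.
- by apply: in_grade_ge3 G; rewrite Ei degX_idx1 (degX_ge2 k2); lia.
- subst i; have j2 : (2 <= j)%N by move: ij; rewrite /=; lia.
  apply/rowP => m; rewrite [RHS]mxE.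
  have [->|[Em|m2]] := idx_cases m; first exact: d2uw.
  + by apply: G; rewrite Em degX_idx2 (degX_ge2 j2) (degX_ge2 k2).
  + by apply: G; rewrite (degX_ge2 m2) degX_idx2 (degX_ge2 j2) (degX_ge2 k2).
- apply: in_grade_ge3 G.
  by rewrite (degX_ge2 i2) (degX_ge2 (leq_trans i2 (ltnW ij))) (degX_ge2 k2).
Qed.

Definition cocycle_rhs (c : C) (A : 'I_n -> 'I_n -> C) (u w : 'I_n) : C :=
  (\sum_l A u l * symp w l) - (\sum_l A w l * symp u l) + c * symp u w.

Lemma d2_idx2_coord1 psi (u w : 'I_n) : skew psi -> (2 <= u)%N -> (2 <= w)%N ->
  d2 phi psi (X C idx2) (X C u) (X C w) 0 idx1 =
  cocycle_rhs (psi (idx2, idx1) 0 idx1) (fun v l => psi (idx2, v) 0 l) u w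
  - (1 + eig u + eig w) * psi (u, w) 0 idx1.
Proof.
move=> psiN u2 w2.
have w1 : (w : nat) != 1%N by apply/eqP => E; move: w2; rewrite E.
rewrite d2E !ev2_X !ffunE /= (brX_idx2_ge2 u2) (brX_idx2_ge2 w2) (brX_ge2 u2 w1).
rewrite !ev2Zl !ev2_X !mxE !ev2_brC_coord.
have -> : \sum_j psi (u, w) 0 j * brX phi idx2 j 0 idx1 = - psi (u, w) 0 idx1.
  rewrite (bigD1 idx1) //= big1 => [|j nj]; last first.
    by rewrite brX_idx2_coord1 (negbTE nj) /= oppr0 mulr0.
  by rewrite brX_idx2_coord1 eqxx /= mulrN1 addr0.
have brS (a b : 'I_n) : (2 <= a)%N -> \sum_j psi (idx2, b) 0 j * brX phi a j 0 idx1 =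
    \sum_j psi (idx2, b) 0 j * symp a j.
  by move=> a2; apply: eq_bigr => j _; rewrite brX_ge2_coord1.
rewrite !brS // (psiN u w) (psiN idx2 idx1) !mxE /cocycle_rhs; ring.
Qed.

Lemma Z20_lin psi psi' a : in_Z2_0 phi psi -> in_Z2_0 phi psi' ->
  in_Z2_0 phi (a *: psi + psi').
Proof.
move=> [A1 /homogeneous0P H1 C1] [A2 /homogeneous0P H2 C2]; split.
- by move=> x; rewrite ev2Pc A1 A2 scaler0 addr0.
- apply/homogeneous0P => i j m Hm.
  by rewrite !ffunE mxE [_ 0 m]mxE H1 // H2 // mulr0 addr0.
- by move=> x y z; rewrite d2Pc C1 C2 scaler0 addr0.
Qed.

Lemma Z20_0 : in_Z2_0 phi 0.
Proof.
split=> [x||x y z]; [exact: ev2c0| |exact: d2c0].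
by apply/homogeneous0P => i j m _; rewrite ffunE mxE.
Qed.

Lemma Z20_sum (I : finType) (F : I -> coch) (a : I -> C) :
  (forall i, in_Z2_0 phi (F i)) -> in_Z2_0 phi (\sum_i a i *: F i).
Proof.
move=> FZ; apply: (big_ind (in_Z2_0 phi)); first exact: Z20_0.
  by move=> x y Hx Hy; have := Z20_lin 1 Hx Hy; rewrite scale1r.
by move=> i _; have := Z20_lin (a i) (FZ i) Z20_0; rewrite addr0.
Qed.

Definition dual_pair (u w : nat) : bool := ~~ odd u && (w == u.+1).

Lemma dual_pair_half (u w : nat) : dual_pair u w -> w./2 = u./2 /\ odd w.
Proof.
move=> /andP [Ou /eqP ->]; split; last by rewrite /= Ou.
by rewrite /= -{1}(odd_double_half u) (negbTE Ou) add0n uphalf_double.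
Qed.

Lemma eig_dual_pair (u w : nat) : dual_pair u w -> 1 + eig u + eig w = 0.
Proof.
move=> uw; have [h Ow] := dual_pair_half uw; move/andP: uw => [Ou _].
by rewrite /eig Ow (negbTE Ou) h; ring.
Qed.

Lemma phinE (k : nat) (k_lt : (k.-1 < p.-1)%N) : phin phi k = phi (Ordinal k_lt).
Proof.
rewrite /phin; case: insubP => [i _ Ei|]; last by rewrite k_lt.
by congr phi; apply/val_inj.
Qed.

Lemma eig_sum_neq0 (u w : 'I_n) : notin_Omega phi -> (2 <= u)%N -> (u < w)%N ->
  ~~ dual_pair u w -> 1 + eig u + eig w != 0.
Proof.
move=> [O1 [_ [O3 _]]] u2 uw NP.
have hu := odd_double_half u; have hw := odd_double_half w.
rewrite -muln2 in hu; rewrite -muln2 in hw.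
have un : ((u : nat) < (2 * (p - 1)).+2)%N by rewrite subn1; exact: ltn_ord u.
have wn : ((w : nat) < (2 * (p - 1)).+2)%N by rewrite subn1; exact: ltn_ord w.
have Ha : ((u : nat)./2.-1 < p.-1)%N by rewrite -!subn1; case: (odd u) hu => /= hu; lia.
have Hb : ((w : nat)./2.-1 < p.-1)%N by rewrite -!subn1; case: (odd w) hw => /= hw; lia.
rewrite /eig !(phinE Ha) !(phinE Hb).
set i := Ordinal Ha; set j := Ordinal Hb.
have Nij : ~~ ((odd u && odd w) || (~~ odd u && ~~ odd w)) -> i != j.
  move=> H; apply/eqP => /(congr1 val) /= E.
  move: NP H; rewrite /dual_pair; case: (odd u) hu => /= hu; case: (odd w) hw => /= hw //.
  - by move=> _ _; lia.
  - move=> NP _; move: NP; have -> : (w : nat) = u.+1 by lia.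
    by rewrite eqxx.
case Ou: (odd u); case Ow: (odd w).
- have -> : 1 - (1 + phi i) - (1 + phi j) = - (1 + phi i + phi j) by ring.
  by rewrite oppr_eq0.
- have -> : 1 - (1 + phi i) + phi j = phi j - phi i by ring.
  by apply: O3; rewrite eq_sym; apply: Nij; rewrite Ou Ow.
- have -> : 1 + phi i - (1 + phi j) = phi i - phi j by ring.
  by apply: O3; apply: Nij; rewrite Ou Ow.
- exact: O1.
Qed.

Lemma sum_mul_eq (F : 'I_n -> C) (k : 'I_n) : \sum_l F l * ((l : nat) == k)%:R = F k.
Proof.
rewrite (bigD1 k) //= eqxx mulr1 big1 ?addr0 // => l nl.
have -> : ((l : nat) == k) = false by exact: negbTE nl.
by rewrite mulr0.
Qed.

Lemma cocycle_rhs_dual_pair c A (u w : 'I_n) : dual_pair u w ->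
  cocycle_rhs c A u w = c - A u u - A w w.
Proof.
move=> uw; have [_ Ow] := dual_pair_half uw; move/andP: (uw) => [Ou /eqP Ew].
have Sw l : symp w l = - ((l : nat) == u)%:R by rewrite /symp Ow Ew.
have Su l : symp u l = ((l : nat) == w)%:R by rewrite /symp (negbTE Ou) Ew.
rewrite /cocycle_rhs; under eq_bigr => l _ do rewrite Sw mulrN.
under [X in _ - X + _]eq_bigr => l _ do rewrite Su.
by rewrite sumrN !sum_mul_eq Su eqxx /= mulr1n mulr1; ring.
Qed.

(* [M] fills the matrix [A], except that at the second vector [w] of a dual
   pair [A w w] is forced and [M w w] is the free [beta] of the pair. *)
Definition Acoef (c : C) (M : nat -> nat -> C) (u l : 'I_n) : C :=
  if (2 <= u)%N && (2 <= l)%N then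
    (if ((u : nat) == l) && odd u then c - M u.-1 u.-1 else M u l)
  else 0.

Definition beta (c : C) (M : nat -> nat -> C) (u w : 'I_n) : C :=
  if dual_pair u w then M w w
  else cocycle_rhs c (Acoef c M) u w / (1 + eig u + eig w).

Definition mkZ_upper (c : C) (M : nat -> nat -> C) (i j : 'I_n) : vec :=
  if (i == 0 :> nat) then (if (j == 1 :> nat) then (- c) *: X C idx1 else 0)
  else if (i == 1 :> nat) then \row_l Acoef c M j l
  else beta c M i j *: X C idx1.

Definition mkZ (c : C) (M : nat -> nat -> C) : coch :=
  [ffun ij : 'I_n * 'I_n =>
    if (ij.1 < ij.2)%N then mkZ_upper c M ij.1 ij.2
    else if (ij.2 < ij.1)%N then - mkZ_upper c M ij.2 ij.1 else 0].

Lemma mkZ_skew c M : skew (mkZ c M).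
Proof. by move=> i j; rewrite !ffunE /=; case: ltngtP; rewrite ?opprK ?oppr0. Qed.

Lemma mkZ_upper_homog0 c M (i j m : 'I_n) : (i < j)%N ->
  degX m != (degX i + degX j)%N -> mkZ_upper c M i j 0 m = 0.
Proof.
rewrite /mkZ_upper; have [->|[->|i2]] := idx_cases i => ij Hm /=.
- case: ifP => j1; last by rewrite mxE.
  rewrite scaleXE; case: (eqVneq idx1 m) => [Em|]; last by rewrite /= mulr0.
  by move: Hm; rewrite -Em /degX (eqP j1).
- rewrite mxE /Acoef; case: ifP => // /andP [_ m2].
  by move: Hm; rewrite degX_idx2 (degX_ge2 m2) (degX_ge2 ij) eqxx.
- have -> : (i == 0 :> nat) = false by apply/eqP; lia.
  have -> : (i == 1 :> nat) = false by apply/eqP; lia.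
  rewrite scaleXE; case: (eqVneq idx1 m) => [Em|]; last by rewrite /= mulr0.
  by move: Hm; rewrite -Em degX_idx1 (degX_ge2 i2) (degX_ge2 (leq_trans i2 (ltnW ij))).
Qed.

Lemma mkZ_homog0 c M : homog0 (mkZ c M).
Proof.
move=> i j m Hm; rewrite ffunE /=; case: ltngtP => ij.
- exact: mkZ_upper_homog0.
- by rewrite mxE mkZ_upper_homog0 ?oppr0 // addnC.
- by rewrite mxE.
Qed.

Lemma mkZ_ge2 c M (u w : 'I_n) : (2 <= u)%N -> (u < w)%N ->
  mkZ c M (u, w) = beta c M u w *: X C idx1.
Proof.
move=> u2 uw; rewrite !ffunE /= uw /mkZ_upper.
have -> : (u == 0 :> nat) = false by apply/eqP; lia.
by have -> : (u == 1 :> nat) = false by apply/eqP; lia.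
Qed.

Lemma mkZ_idx2 c M (w l : 'I_n) : (2 <= w)%N -> mkZ c M (idx2, w) 0 l = Acoef c M w l.
Proof. by move=> w2; rewrite ffunE /= w2 /mkZ_upper /= mxE. Qed.

Lemma mkZ_idx2_idx1 c M : mkZ c M (idx2, idx1) = c *: X C idx1.
Proof. by rewrite ffunE /= /mkZ_upper /= scaleNr opprK. Qed.

Lemma mkZ_in_Z20 c M : notin_Omega phi -> in_Z2_0 phi (mkZ c M).
Proof.
move=> phiO; split; first exact/alternatingP/mkZ_skew.
  exact/homogeneous0P/mkZ_homog0.
apply: cocycle_reduction; [exact: mkZ_skew|exact: mkZ_homog0|] => u w u2 uw.
have w2 : (2 <= w)%N by lia.
rewrite d2_idx2_coord1 //; last exact: mkZ_skew.
rewrite (mkZ_ge2 _ _ u2 uw) mkZ_idx2_idx1 !scaleXE eqxx !mulr1.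
have -> : cocycle_rhs c (fun v l => mkZ c M (idx2, v) 0 l) u w = cocycle_rhs c (Acoef c M) u w.
  by congr (_ - _ + _); apply: eq_bigr => l _; rewrite mkZ_idx2.
rewrite /beta; case: ifPn => [uw_pair|uw_pair].
  rewrite eig_dual_pair // mul0r subr0 cocycle_rhs_dual_pair //.
  move/andP: (uw_pair) => [Ou /eqP Ew].
  by rewrite /Acoef u2 w2 !eqxx /= (negbTE Ou) Ew /= Ou; ring.
by rewrite mulrC divfK ?subrr //; apply: eig_sum_neq0.
Qed.

Local Notation n1 := (2 * p.-1)%N.
Local Notation Idx := (option ('I_n1 * 'I_n1)).

Definition shift1 (a : 'I_n1) : 'I_n := @Ordinal n a.+1 (ltnW (ltn_ord a)).
Definition shift2 (a : 'I_n1) : 'I_n := @Ordinal n a.+2 (ltn_ord a).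

Lemma shift2_surj (u : 'I_n) : (2 <= u)%N -> {a : 'I_n1 | shift2 a = u}.
Proof.
move=> u2; have a_lt : ((u : nat) - 2 < n1)%N.
  by have := ltn_ord u; move: (u : nat) u2 => x; rewrite /dimF; move: (p.-1) => q; lia.
by exists (Ordinal a_lt); apply/val_inj => /=; lia.
Qed.

Definition dual_diag (a b : 'I_n1) : bool := (a == b) && odd a.

Definition coord psi (k : Idx) : C :=
  if k is Some (a, b) then
    if dual_diag a b then psi (shift1 a, shift2 a) 0 idx1
    else psi (idx2, shift2 a) 0 (shift2 b)
  else psi (idx2, idx1) 0 idx1.

Lemma coordP psi psi' a k : coord (a *: psi + psi') k = a * coord psi k + coord psi' k.
Proof. by case: k => [[? ?]|] /=; [case: ifP => _|]; rewrite !ffunE !mxE. Qed.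

Lemma coordZ psi a k : coord (a *: psi) k = a * coord psi k.
Proof. by case: k => [[? ?]|] /=; [case: ifP => _|]; rewrite !ffunE !mxE. Qed.

Lemma coord0 k : coord 0 k = 0.
Proof. by case: k => [[? ?]|] /=; [case: ifP => _|]; rewrite !ffunE !mxE. Qed.

Lemma coord_sum (I : finType) (F : I -> coch) k :
  coord (\sum_i F i) k = \sum_i coord (F i) k.
Proof. by case: k => [[? ?]|] /=; [case: ifP => _|]; rewrite sum_ffunE summxE. Qed.

Lemma coord_mkZ c M k :
  coord (mkZ c M) k = if k is Some (a, b) then M a.+2 b.+2 else c.
Proof.
case: k => [[a b]|] /=; last by rewrite mkZ_idx2_idx1 scaleXE eqxx mulr1.
case Dab: (dual_diag a b).
  move: Dab => /andP [/eqP <- Oa].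
  have u2 : (2 <= shift1 a)%N by rewrite /=; case: (a : nat) Oa.
  rewrite (mkZ_ge2 _ _ u2 (ltnSn _ : (shift1 a < shift2 a)%N)) scaleXE eqxx mulr1 /beta.
  by have -> : dual_pair (shift1 a) (shift2 a) by rewrite /dual_pair /= Oa eqxx.
rewrite mkZ_idx2 // /Acoef /= negbK eqSS.
by have -> : ((a : nat) == b) && odd a = false by exact: Dab.
Qed.

Lemma skew_homog0_eq0 psi : skew psi -> homog0 psi ->
  psi (idx2, idx1) 0 idx1 = 0 ->
  (forall w l : 'I_n, (2 <= w)%N -> psi (idx2, w) 0 l = 0) ->
  (forall u w : 'I_n, (2 <= u)%N -> (u < w)%N -> psi (u, w) 0 idx1 = 0) ->
  psi = 0.
Proof.
move=> psiN psi0 c0 A0 beta0.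
have psi_diag i : psi (i, i) = 0 by apply: mx_eqN_eq0; rewrite {1}psiN.
have upper (i j : 'I_n) : (i < j)%N -> psi (i, j) = 0.
  move=> ij; apply/rowP => m; rewrite [RHS]mxE.
  have [Ei|[Ei|i2]] := idx_cases i.
  - subst i; have [Ej|[Ej|j2]] := idx_cases j; first by subst j.
      subst j; have [->|[->|m2]] := idx_cases m.
      + by rewrite psiN mxE c0 oppr0.
      + by rewrite psi0.
      + by rewrite psi0 // degX_idx1 degX_idx2 (degX_ge2 m2).
    apply: psi0; apply/negP => /eqP E; move: (degX_le2 m).
    by rewrite E degX_idx1 (degX_ge2 j2).
  - by subst i; apply: A0; move: ij; rewrite /=; lia.
  - have j2 : (2 <= j)%N by lia.
    have [->|[->|m2]] := idx_cases m; first exact: beta0.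
    + by rewrite psi0 // degX_idx2 (degX_ge2 i2) (degX_ge2 j2).
    + by rewrite psi0 // (degX_ge2 m2) (degX_ge2 i2) (degX_ge2 j2).
apply/ffunP => [[i j]]; rewrite ffunE.
case: (ltngtP i j) => [ij|ji|/val_inj ->]; first exact: upper.
  by rewrite psiN upper // oppr0.
exact: psi_diag.
Qed.

(* On a dual pair the cocycle equation reads [c = A u u + A w w]. *)
Lemma Z20_coord0_idx2 psi : in_Z2_0 phi psi -> (forall k, coord psi k = 0) ->
  forall w l : 'I_n, (2 <= w)%N -> psi (idx2, w) 0 l = 0.
Proof.
move=> [/alternatingP psiN /homogeneous0P psi0 d2psi] coord_psi w l w2.
have [->|[->|l2]] := idx_cases l.
- by rewrite psi0 // degX_idx1 degX_idx2 (degX_ge2 w2).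
- by rewrite psi0 // degX_idx2 (degX_ge2 w2).
have [a <-] := shift2_surj w2; have [b <-] := shift2_surj l2.
case Dab: (dual_diag a b); last by have := coord_psi (Some (a, b)); rewrite /= Dab.
move: Dab => /andP [/eqP <- Oa].
have u2 : (2 <= shift1 a)%N by rewrite /=; case: (a : nat) Oa.
have uw : dual_pair (shift1 a) (shift2 a) by rewrite /dual_pair /= Oa eqxx.
have c0 : psi (idx2, idx1) 0 idx1 = 0 by exact: coord_psi None.
have Au0 : psi (idx2, shift1 a) 0 (shift1 a) = 0.
  have [a' Ea'] := shift2_surj u2.
  have Oa' : odd a' = false.
    have Ea : (a : nat) = a'.+1 by move/(congr1 val): Ea' => /=; lia.
    by move: Oa; rewrite Ea /= => /negbTE.
  by have := coord_psi (Some (a', a')); rewrite /= /dual_diag eqxx Oa' Ea'.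
have d2a : d2 phi psi (X C idx2) (X C (shift1 a)) (X C (shift2 a)) 0 idx1 = 0.
  by rewrite d2psi mxE.
move: d2a; rewrite d2_idx2_coord1 // eig_dual_pair // mul0r subr0.
rewrite cocycle_rhs_dual_pair // c0 Au0 subrr sub0r => /eqP.
by rewrite oppr_eq0 => /eqP.
Qed.

Lemma Z20_coord0_ge2 psi : notin_Omega phi -> in_Z2_0 phi psi ->
  (forall k, coord psi k = 0) ->
  forall u w : 'I_n, (2 <= u)%N -> (u < w)%N -> psi (u, w) 0 idx1 = 0.
Proof.
move=> phiO psiZ coord_psi u w u2 uw; have w2 : (2 <= w)%N by lia.
have A0 := Z20_coord0_idx2 psiZ coord_psi.
case: psiZ => [/alternatingP psiN _ d2psi].
case: (boolP (dual_pair u w)) => [uw_pair|uw_npair].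
  have [b Eb] := shift2_surj w2.
  have [_ Ow] := dual_pair_half uw_pair; move/andP: uw_pair => [_ /eqP Ew].
  have Ob : odd b by move: Ow; rewrite -Eb /= negbK.
  have -> : u = shift1 b by apply/val_inj; move/(congr1 val): Eb => /=; lia.
  by have := coord_psi (Some (b, b)); rewrite /= /dual_diag eqxx Ob Eb.
have c0 : psi (idx2, idx1) 0 idx1 = 0 by exact: coord_psi None.
have d2uw : d2 phi psi (X C idx2) (X C u) (X C w) 0 idx1 = 0 by rewrite d2psi mxE.
move: d2uw; rewrite d2_idx2_coord1 // /cocycle_rhs c0 mul0r addr0.
rewrite !big1 => [|l _|l _]; rewrite ?A0 ?mul0r //.
rewrite subrr sub0r => /eqP; rewrite oppr_eq0 mulf_eq0.
by rewrite (negbTE (eig_sum_neq0 phiO u2 uw uw_npair)) => /eqP.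
Qed.

Lemma Z20_coord_inj psi : notin_Omega phi -> in_Z2_0 phi psi ->
  (forall k, coord psi k = 0) -> psi = 0.
Proof.
move=> phiO psiZ coord_psi.
have [/alternatingP psiN /homogeneous0P psi0 _] := psiZ.
apply: skew_homog0_eq0 => //; first exact: coord_psi None.
  exact: Z20_coord0_idx2.
exact: Z20_coord0_ge2.
Qed.

Definition Zbasis (k : Idx) : coch :=
  mkZ (if k is None then 1 else 0)
      (fun u l => if k is Some (a, b) then ((u == a.+2) && (l == b.+2))%:R else 0).

Lemma coord_Zbasis k k' : coord (Zbasis k) k' = (k == k')%:R.
Proof.
rewrite coord_mkZ; case: k => [[a b]|]; case: k' => [[a' b']|] //=.
have -> : (Some (a, b) == Some (a', b')) = ((a, b) == (a', b')) by [].
by rewrite !eqSS xpair_eqE [a == a']eq_sym [b == b']eq_sym.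
Qed.

Definition Zbasis_tuple := [tuple Zbasis (enum_val k) | k < #|{: Idx}|].

Lemma Zbasis_free : free Zbasis_tuple.
Proof.
apply/freeP => x x0 k; have := congr1 (coord^~ (enum_val k)) x0.
rewrite /= coord_sum coord0.
under eq_bigr => j _ do rewrite nth_mktuple coordZ coord_Zbasis.
by rewrite sum_enum_val_eq enum_valK.
Qed.

Lemma mem_span_Zbasis psi : notin_Omega phi ->
  psi \in <<Zbasis_tuple>>%VS <-> in_Z2_0 phi psi.
Proof.
move=> phiO; split.
  by move/coord_span => ->; apply: Z20_sum => k; rewrite nth_mktuple; exact: mkZ_in_Z20.
move=> psiZ.
pose S := \sum_(k < #|{: Idx}|) coord psi (enum_val k) *: Zbasis (enum_val k).
have SZ : in_Z2_0 phi S by apply: Z20_sum => k; exact: mkZ_in_Z20.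
have : (-1) *: S + psi = 0.
  apply: Z20_coord_inj => //; first exact: Z20_lin.
  move=> k; rewrite coordP coord_sum.
  under eq_bigr => j _ do rewrite coordZ coord_Zbasis.
  by rewrite sum_enum_val_eq enum_rankK; ring.
move/eqP; rewrite scaleN1r addrC subr_eq0 => /eqP ->.
apply: memv_suml => k _; apply: memvZ; apply: memv_span.
have -> : Zbasis (enum_val k) = Zbasis_tuple`_k by rewrite nth_mktuple.
by apply: mem_nth; rewrite size_tuple.
Qed.

End Fphi.

Local Open Scope complex_scope.

Theorem lemma5 (R : realType) (p : nat) (phi : 'I_p.-1 -> R[i]) :
  (2 <= p)%N -> notin_Omega phi ->
  exists U : {vspace cochain2 R[i] p},
    (forall psi : cochain2 R[i] p, psi \in U <-> in_Z2_0 phi psi) /\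
    \dim U = (4 * p ^ 2 + 5 - 8 * p)%N.
Proof.
move=> p2 phiO; exists <<Zbasis_tuple phi>>%VS.
split=> [psi|]; first exact: mem_span_Zbasis.
rewrite (eqP (Zbasis_free phi)) size_tuple card_option card_prod card_ord.
have p_eq : p = p.-1.+1 by lia.
by move: (p.-1) p_eq => q ->; rewrite expnS expn1; nia.
Qed.
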